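(* Let $X$ be a finite set, let $\mathcal{F}$ be a closure system on $X$, let $\Sigma$ be the canonical direct basis of $\mathcal{F}$, and let $A\subseteq X$. Let $\mathcal{F}(A)=\mathcal{F}\cup\{F\cap A:F\in\mathcal{F}\}$. Then the modified body-building formula $\Sigma^*(A)$ is the canonical direct basis of the closure system $\mathcal{F}(A)$.
   Context: An implication on $X$ is $C\rightarrow d$ with $C\subseteq X$, $d\in X$; a set $Y$ satisfies it if $C\not\subseteq Y$ or $d\in Y$, otherwise it fails on $Y$. A set $\Sigma$ of implications is a basis of a closure system $\mathcal{F}$ if $\mathcal{F}$ is exactly the family of subsets of $X$ satisfying all implications of $\Sigma$. With $\varphi$ the closure operator of $\mathcal{F}$ ($\varphi(Y)$ = smallest member of $\mathcal{F}$ containing $Y$), the canonical direct basis of $\mathcal{F}$ is the set of all implications $C\rightarrow d$ such that $d\notin C$, $d\in\varphi(C)$, and $d\notin\varphi(C')$ for every proper subset $C'\subsetneq C$. Modified body-building formula: $\Sigma_t(A)$ is the set of implications of $\Sigma$ holding on $A$ and $\Sigma_f(A)$ the set of those failing on $A$ ($C\subseteq A$, $d\notin A$). For $(C\rightarrow d)\in\Sigma$ let $E_C=\{x\in X: \{x\}=G\setminus C \text{ for some implication } (G\rightarrow d)\in\Sigma\}$ (implications with the same consequent $d$). For $\sigma=(C\rightarrow d)\in\Sigma_f(A)$ let $\sigma^*(A)=\{C\cup\{x\}\rightarrow d: x\in X\setminus(A\cup\{d\}\cup E_C)\}$, and $\Sigma^*(A)=\Sigma_t(A)\cup\bigcup_{\sigma\in\Sigma_f(A)}\sigma^*(A)$.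 *)

From mathcomp Require Import all_boot.
Set Implicit Arguments. Unset Strict Implicit. Unset Printing Implicit Defensive.

Section ImplDefs.
Variable T : finType.

Definition impl := ({set T} * T)%type.

Definition satisfies (Y : {set T}) (s : impl) : bool := ~~ (s.1 \subset Y) || (s.2 \in Y).

(* Closure system on T: contains T and is closed under intersection
   (for a finite T this gives closure under arbitrary intersections). *)
Definition closure_system (F : {set {set T}}) : Prop :=
  setT \in F /\ forall Y Z, Y \in F -> Z \in F -> Y :&: Z \in F.

Definition is_basis (Sigma : {set impl}) (F : {set {set T}}) : Prop :=
  forall Y : {set T}, (Y \in F) = [forall s in Sigma, satisfies Y s].

Definition phi (F : {set {set T}}) (Y : {set T}) : {set T} :=
  \bigcap_(Z in F | Y \subset Z) Z.

Definition cdb (F : {set {set T}}) : {set impl} :=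
  [set s : impl | [&& s.2 \notin s.1, s.2 \in phi F s.1 &
     [forall C' : {set T}, (C' \proper s.1) ==> (s.2 \notin phi F C')]]].

Definition Sigma_t (Sigma : {set impl}) (A : {set T}) : {set impl} :=
  [set s in Sigma | satisfies A s].
Definition Sigma_f (Sigma : {set impl}) (A : {set T}) : {set impl} :=
  [set s in Sigma | ~~ satisfies A s].

Definition E_C (Sigma : {set impl}) (C : {set T}) (d : T) : {set T} :=
  [set x : T | [exists G : {set T}, ((G, d) \in Sigma) && (G :\: C == [set x])]].

Definition sigma_star (Sigma : {set impl}) (A : {set T}) (s : impl) : {set impl} :=
  [set ((s.1 :|: [set x]), s.2) | x in ~: (A :|: [set s.2] :|: E_C Sigma s.1 s.2)].

Definition Sigma_star (Sigma : {set impl}) (A : {set T}) : {set impl} :=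
  Sigma_t Sigma A :|: \bigcup_(s in Sigma_f Sigma A) sigma_star Sigma A s.

Definition FA (F : {set {set T}}) (A : {set T}) : {set {set T}} :=
  F :|: [set Z :&: A | Z in F].

End ImplDefs.

From mathcomp Require Import all_boot.
Set Implicit Arguments. Unset Strict Implicit. Unset Printing Implicit Defensive.

(* Since A itself lies in F(A), the closure of Y in F(A) is phi(Y), cut down to
   phi(Y) :&: A when Y is contained in A.  Hence an implication D -> d of the
   canonical direct basis of F(A) is either already minimal for F and holds on A,
   or D is not minimal for F: then d is generated by some minimal premise C inside
   A with d outside A, and the minimality in F(A) forces D = C + x for one point x
   outside A.  The point x is excluded from E_C exactly when no other minimal
   premise G of d lies in C + x, which is what minimality of C + x requires. *)

Section ClosureOperator.
Variable T : finType.
Implicit Types (F : {set {set T}}) (C D G Y : {set T}) (d x : T).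

Lemma phiP F Y x :
  reflect (forall Z, Z \in F -> Y \subset Z -> x \in Z) (x \in phi F Y).
Proof.
apply: (iffP bigcapP) => [H Z FZ YZ | H Z /andP[]]; last exact: H.
by apply: H; rewrite FZ YZ.
Qed.

Lemma phiS F Y Y' x : Y \subset Y' -> x \in phi F Y -> x \in phi F Y'.
Proof.
by move=> sYY' /phiP H; apply/phiP => Z FZ sY'Z; apply: H (subset_trans sYY' sY'Z).
Qed.

Lemma cdbP F C d :
  reflect [/\ d \notin C, d \in phi F C &
           forall C', C' \proper C -> d \notin phi F C'] ((C, d) \in cdb F).
Proof.
rewrite inE /=; apply: (iffP and3P) => -[dC dphiC H]; split=> //.
- by move=> C' /(implyP (forallP H C')).
- by apply/forallP => C'; apply/implyP; apply: H.
Qed.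

Lemma cdb_min F C G d : (C, d) \in cdb F -> G \subset C -> d \in phi F G -> G = C.
Proof.
case/cdbP=> _ _ minC sGC dG; apply/eqP; rewrite eqEproper sGC /=.
by apply/negP => /minC; rewrite dG.
Qed.

Lemma cdb_sub_premise F Y d : d \in phi F Y -> d \notin Y ->
  exists2 C : {set T}, C \subset Y & (C, d) \in cdb F.
Proof.
elim: {Y}_.+1 {-2}Y (ltnSn #|Y|) => // n IH Y leYn dY dNY.
case: (boolP [forall C : {set T}, (C \proper Y) ==> (d \notin phi F C)]) => [minY | ].
  by exists Y => //; apply/cdbP; split=> // C; apply: (implyP (forallP minY C)).
case/forallPn=> C; rewrite negb_imply negbK => /andP[ltCY dC].
have [||G sGC GdF] := IH C _ dC _.
- exact: leq_trans (proper_card ltCY) leYn.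
- by apply: contra dNY; apply: subsetP (proper_sub ltCY) d.
by exists G => //; apply: subset_trans sGC (proper_sub ltCY).
Qed.

Lemma cdb_proper_premise F D d :
  d \notin D -> d \in phi F D -> (D, d) \notin cdb F ->
  exists2 C : {set T}, C \proper D & (C, d) \in cdb F.
Proof.
move=> dD dphiD; rewrite inE /= dD dphiD /=.
case/forallPn=> C'; rewrite negb_imply negbK => /andP[ltC'D dC'].
have [|C sCC' CdF] := cdb_sub_premise dC'.
  by apply: contra dD; apply: subsetP (proper_sub ltC'D) d.
by exists C => //; apply: sub_proper_trans sCC' ltC'D.
Qed.

Lemma setD_eq_set1 G C x : x \notin C ->
  (G :\: C == [set x]) = (x \in G) && (G \subset C :|: [set x]).
Proof.
move=> xC; apply/eqP/andP => [GC | [xG sGCx]].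
  have : x \in G :\: C by rewrite GC set11.
  rewrite inE => /andP[_ xG]; split=> //; apply/subsetP => y yG.
  by rewrite !inE; case: (boolP (y \in C)) => //= yC; rewrite -in_set1 -GC inE yC.
apply/setP => y; rewrite !inE; case: eqP => [-> | /eqP yx]; first by rewrite xC.
by apply/negbTE; apply: contra yx => /andP[yC /(subsetP sGCx)]; rewrite !inE (negbTE yC).
Qed.

Lemma E_CP (S : {set impl T}) C d x :
  reflect (exists2 G : {set T}, (G, d) \in S & G :\: C = [set x]) (x \in E_C S C d).
Proof.
rewrite inE; apply: (iffP existsP) => [[G /andP[GdS /eqP]] | [G GdS GC]].
  by exists G.
by exists G; rewrite GdS GC eqxx.
Qed.

End ClosureOperator.

Section TraceClosureSystem.
Variables (T : finType) (F : {set {set T}}) (A : {set T}).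
Hypothesis FT : setT \in F.
Implicit Types (C D G Y : {set T}) (d x : T).

Lemma mem_phi_FA Y x :
  (x \in phi (FA F A) Y) = (x \in phi F Y) && ((Y \subset A) ==> (x \in A)).
Proof.
have FA_A : A \in FA F A.
  by rewrite inE; apply/orP; right; apply/imsetP; exists setT; rewrite ?setTI.
apply/idP/andP => [/phiP H | [/phiP H /implyP YAx]].
  split; first by apply/phiP => Z FZ; apply: H; rewrite inE FZ.
  by apply/implyP; apply: H.
apply/phiP => Z; rewrite inE => /orP[FZ | /imsetP[W FW ->]]; first exact: H.
by rewrite subsetI inE => /andP[YW YA]; rewrite H ?YAx.
Qed.

Lemma cdb_FA_satisfies D d : (D, d) \in cdb (FA F A) -> satisfies A (D, d).
Proof.
by case/cdbP=> _; rewrite mem_phi_FA /satisfies /= => /andP[_]; rewrite implybE.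
Qed.

Lemma cdb_FA_proper D d Y : (D, d) \in cdb (FA F A) -> Y \proper D ->
  d \in phi F Y -> (Y \subset A) && (d \notin A).
Proof.
by case/cdbP=> _ _ minD /minD; rewrite mem_phi_FA negb_and negb_imply => /orP[/negP|].
Qed.

Lemma cdb_FA_cdb C d :
  (C, d) \in cdb F -> satisfies A (C, d) -> (C, d) \in cdb (FA F A).
Proof.
case/cdbP=> dC dphiC minC satC; apply/cdbP; split=> //.
  by rewrite mem_phi_FA dphiC implybE.
by move=> C' /minC dC'; rewrite mem_phi_FA (negbTE dC').
Qed.

Lemma notin_phi_extension C d x Y : (C, d) \in cdb F -> x != d ->
  x \notin C -> x \notin E_C (cdb F) C d ->
  Y \proper C :|: [set x] -> x \in Y -> d \notin phi F Y.
Proof.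
move=> CdF xd xC xE ltYCx xY; apply/negP => dY.
have sYCx := proper_sub ltYCx.
have [|G sGY GdF] := cdb_sub_premise dY.
  apply: contra xd => /(subsetP sYCx); rewrite !inE => /orP[dC | /eqP <-] //.
  by case/cdbP: CdF; rewrite dC.
have sGCx := subset_trans sGY sYCx.
case: (boolP (x \in G)) => [xG | xG].
  by case/E_CP: xE; exists G => //; apply/eqP; rewrite setD_eq_set1 ?xG.
have sGC : G \subset C.
  apply/subsetP => y yG; move/subsetP: sGCx => /(_ y yG); rewrite !inE.
  by case/orP=> // /eqP yx; move: xG; rewrite -yx yG.
case/cdbP: GdF => _ dG _; move: ltYCx; rewrite (cdb_min CdF sGC dG) in sGY.
by rewrite properE subUset sub1set xY sGY andbF.
Qed.

Lemma cdb_FA_sigma_star C d x : (C, d) \in Sigma_f (cdb F) A ->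
  x \in ~: (A :|: [set d] :|: E_C (cdb F) C d) ->
  (C :|: [set x], d) \in cdb (FA F A).
Proof.
rewrite inE /satisfies /= negb_or negbK => /and3P[CdF sCA dA].
rewrite in_setC !in_setU in_set1 !negb_or => /andP[/andP[xA xd] xE].
have xC : x \notin C by apply: contra xA; apply: subsetP.
have [dC dphiC _] := cdbP _ _ _ CdF.
apply/cdbP; split.
- by rewrite !inE negb_or dC eq_sym.
- by rewrite mem_phi_FA (phiS (subsetUl _ _) dphiC) subUset sub1set (negbTE xA) andbF.
move=> Y ltYCx; rewrite mem_phi_FA negb_and; case: (boolP (x \in Y)) => xY.
  by rewrite (notin_phi_extension CdF _ xC xE ltYCx xY) // eq_sym.
have sYC : Y \subset C.
  apply/subsetP => y yY; move/subsetP: (proper_sub ltYCx) => /(_ y yY); rewrite !inE.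
  by case/orP=> // /eqP yx; move: xY; rewrite -yx yY.
by rewrite (subset_trans sYC sCA) /= dA orbT.
Qed.

Lemma cdb_FA_body D d : (D, d) \in cdb (FA F A) -> (D, d) \notin cdb F ->
  exists (C : {set T}) x, [/\ (C, d) \in Sigma_f (cdb F) A,
    x \in ~: (A :|: [set d] :|: E_C (cdb F) C d) & D = C :|: [set x]].
Proof.
move=> DdFA DdNF; have [dD] := cdbP _ _ _ DdFA; rewrite mem_phi_FA => /andP[dphiD DAdA] _.
have [C ltCD CdF] := cdb_proper_premise dD dphiD DdNF.
have [dC dphiC _] := cdbP _ _ _ CdF.
have /andP[sCA dA] := cdb_FA_proper DdFA ltCD dphiC.
have /subsetPn[x xD xA] : ~~ (D \subset A) by apply: contra dA; apply: implyP.
have Cx_NA : ~~ (C :|: [set x] \subset A) by rewrite subUset sub1set (negbTE xA) andbF.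
have eD : C :|: [set x] = D.
  apply/eqP; rewrite eqEproper subUset sub1set (proper_sub ltCD) xD /=.
  apply/negP => /(cdb_FA_proper DdFA)/(_ (phiS (subsetUl _ _) dphiC)).
  by rewrite (negbTE Cx_NA).
have xC : x \notin C by apply: contra xA; apply: subsetP.
exists C, x; split=> //; first by rewrite inE CdF /satisfies /= sCA dA.
rewrite in_setC !in_setU in_set1 !negb_or (negbTE xA) /=; apply/andP; split.
  by apply: contraNneq dD => <-.
apply/negP => /E_CP[G GdF /eqP]; rewrite setD_eq_set1 // eD => /andP[xG sGD].
have ltGD : G \proper D.
  by rewrite properEneq sGD andbT; apply: contraNneq DdNF => <-.
have [_ dG _] := cdbP _ _ _ GdF.
have /andP[sGA _] := cdb_FA_proper DdFA ltGD dG.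
by rewrite (subsetP sGA x xG) in xA.
Qed.

End TraceClosureSystem.

Theorem mainTheorem2 (T : finType) (F : {set {set T}}) (A : {set T}) :
  closure_system F ->
  Sigma_star (cdb F) A = cdb (FA F A).
Proof.
move=> [FT _]; apply/setP => -[D d]; apply/idP/idP.
- rewrite in_setU => /orP[ | /bigcupP[[C d'] Cd_f /imsetP[x xP [-> ->]]]].
    by rewrite inE => /andP[]; apply: cdb_FA_cdb.
  by move: xP => /= xP; apply: cdb_FA_sigma_star.
move=> DdFA; rewrite in_setU; case: (boolP ((D, d) \in cdb F)) => DdF.
  by rewrite inE DdF (cdb_FA_satisfies FT DdFA).
have [C [x [Cd_f xP ->]]] := cdb_FA_body FT DdFA DdF.
by apply/orP; right; apply/bigcupP; exists (C, d) => //; apply/imsetP; exists x.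
Qed.
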